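(* Let $f$ be a probability density on $\mathbb{R}$ symmetric about $0$, let $G$ be an absolutely continuous cumulative distribution function on $\mathbb{R}$ symmetric about $0$ with density $g$, and let $\omega:\mathbb{R}\to\mathbb{R}$ be an odd function with $\omega(x)>0$ for $x>0$. Assume $g$ is a bounded probability density and $\int_0^\infty\omega(x)f(x)\,dx<\infty$, and define $$\pi_{TV}(\lambda\mid 1,1)=2\int_0^\infty \omega(x)\,f(x)\,g(\lambda\,\omega(x))\,dx,\qquad \lambda\in\mathbb{R}.$$ Then: (i) $\pi_{TV}(\lambda\mid 1,1)$ is symmetric about $\lambda=0$; (ii) if $g$ is unimodal, then $\pi_{TV}(\lambda\mid 1,1)$ is decreasing in $|\lambda|$; (iii) if $\omega(x)=x$, $f$ is unimodal, $f(0)=M<\infty$ and $\int_0^\infty x\,g(x)\,dx<\infty$, then the tails of $\pi_{TV}(\lambda\mid 1,1)$ are of order $O(|\lambda|^{-2})$ as $|\lambda|\to\infty$.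
   Context: This $\pi_{TV}(\lambda\mid1,1)$ is the $BTV(1,1)$ prior for the skewness parameter $\lambda$ of the skew-symmetric densities $\frac{2}{\sigma}f\left(\frac{x-\mu}{\sigma}\right)G\left(\lambda\,\omega\left(\frac{x-\mu}{\sigma}\right)\right)$; it equals $\frac{d}{d\lambda}M_{TV}(\lambda)$ where $M_{TV}(\lambda)=\operatorname{sign}(\lambda)\frac12\int_{\mathbb{R}}|2G(\lambda\omega(x))-1|f(x)\,dx$. *)

From HB Require Import structures.
From mathcomp Require Import all_boot all_order all_algebra.
From mathcomp Require Import all_classical all_reals all_analysis.
Set Implicit Arguments. Unset Strict Implicit. Unset Printing Implicit Defensive.
Import Order.TTheory GRing.Theory Num.Theory.
Local Open Scope classical_set_scope.
Local Open Scope ring_scope.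

Section Defs.
Variable R : realType.
Notation mu := (@lebesgue_measure R).

Definition prob_density (f : R -> R) : Prop :=
  measurable_fun setT f /\ (forall x, 0 <= f x) /\
  (\int[mu]_x (f x)%:E = 1)%E.

Definition symmetric0 (f : R -> R) : Prop := forall x, f (- x) = f x.

Definition cdf_of_density (G g : R -> R) : Prop :=
  forall x, G x = Rintegral mu `]-oo, x] g.

Definition cdf_symmetric0 (G : R -> R) : Prop := forall x, G (- x) = 1 - G x.

Definition odd_fun (w : R -> R) : Prop := forall x, w (- x) = - w x.


Definition unimodal (g : R -> R) : Prop :=
  exists m : R,
    (forall x y, x <= y -> y <= m -> g x <= g y) /\
    (forall x y, m <= x -> x <= y -> g y <= g x).

Definition piTV (f g w : R -> R) (l : R) : R :=
  2 * Rintegral mu `[0%R, +oo[ (fun x => w x * f x * g (l * w x)).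

End Defs.

From HB Require Import structures.
From mathcomp Require Import all_boot all_order all_algebra.
From mathcomp Require Import all_classical all_reals all_analysis.
From mathcomp Require Import measurable_realfun ring lra.
Import Order.TTheory GRing.Theory Num.Theory.
Local Open Scope classical_set_scope.
Local Open Scope ring_scope.

(* For x >= 0 the integrand of piTV f g w l is w x * f x * g (|l| w x), since g
   is even.  A symmetric unimodal g is a nonincreasing function of |y|, which
   gives (ii) pointwise under the integral.  For (iii), f <= f 0 on [0, +oo[ and
   the substitution y = |l| x give
     int_0^oo x f x g (l x) dx <= f 0 / |l|^2 * int_0^oo y g y dy. *)
Section lebesgue_dilation.
Context {R : realType}.
Local Notation mu := (@lebesgue_measure R).
Variable c : R.
Hypothesis c_gt0 : 0 < c.

Let mulc_measurable : measurable_fun setT ( *%R c : R -> measurableTypeR R).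
Proof. exact: mulrl_measurable. Qed.

(* The measure instance of [pushforward] depends on the measurability proof,
   so it cannot be inferred and is named explicitly. *)
Let dilated : {measure set (measurableTypeR R) -> \bar R} :=
  measure_function_pushforward__canonical__measure_function_Measure
    mu mulc_measurable.

Let c_nng : {nonneg R} := NngNum (ltW c_gt0).

Lemma lebesgue_measure_dilation (A : set R) : measurable A ->
  mu A = (c%:E * mu (( *%R c) @^-1` A))%E.
Proof.
apply: (@lebesgue_measure_unique R (mscale c_nng dilated)).
move=> _ [[a b]] _ <-.
change (mu `]a, b] = c%:E * mu (( *%R c) @^-1` `]a, b]))%E.
have -> : ( *%R c) @^-1` `]a, b]%classic = `]a / c, b / c]%classic.
  apply/seteqP; split => x /=;
  by rewrite !in_itv /= ltr_pdivrMr // ler_pdivlMr // ![x * c]mulrC.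
rewrite !lebesgue_measure_itv /= !lte_fin ltr_pM2r ?invr_gt0 //.
case: ifPn => ab; last by rewrite mule0.
by rewrite -EFinD -EFinM -mulrBl mulrCA divff ?gt_eqF // mulr1.
Qed.

Lemma ge0_integral_dilation (D : set R) (h : R -> \bar R) :
  measurable D -> measurable_fun D h -> (forall x, D x -> 0 <= h x)%E ->
  (\int[mu]_(x in ( *%R c) @^-1` D) h (c * x)%R =
   c^-1%:E * \int[mu]_(x in D) h x)%E.
Proof.
move=> mD mh h_ge0.
have -> : (\int[mu]_(x in D) h x = \int[mscale c_nng dilated]_(x in D) h x)%E.
  by apply: eq_measure_integral => A mA _; exact: lebesgue_measure_dilation.
rewrite ge0_integral_mscale //= ge0_integral_pushforward //; last first.
  by move=> x /[!inE]; exact: h_ge0.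
by rewrite muleA -EFinM mulVf ?gt_eqF // mul1e.
Qed.

End lebesgue_dilation.

Section symmetric_functions.
Context {R : realType}.

Lemma symmetric0_normr {g : R -> R} : symmetric0 g -> forall x, g `|x| = g x.
Proof.
move=> g_sym x; have [x_ge0|x_lt0] := leP 0 x; first by rewrite ger0_norm.
by rewrite ltr0_norm // g_sym.
Qed.

Lemma symmetric_unimodal_le_normr (g : R -> R) (x y : R) :
  symmetric0 g -> unimodal g -> `|x| <= `|y| -> g y <= g x.
Proof.
move=> g_sym [m [g_up g_down]] xy.
rewrite -(symmetric0_normr g_sym x) -(symmetric0_normr g_sym y).
have [m_ge0|m_lt0] := leP 0 m.
  rewrite -(g_sym `|y|) -(g_sym `|x|); apply: g_up; first by rewrite lerN2.
  by rewrite lerNl (le_trans _ (normr_ge0 x)) // oppr_le0.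
by apply: g_down => //; exact: le_trans (ltW m_lt0) (normr_ge0 x).
Qed.

Lemma odd_fun_ge0 (w : R -> R) (x : R) : odd_fun w ->
  (forall y, 0 < y -> 0 < w y) -> 0 <= x -> 0 <= w x.
Proof.
move=> w_odd w_pos; rewrite le_eqVlt => /predU1P[<-|/w_pos/ltW//].
by have := w_odd 0; rewrite oppr0 => w0; lra.
Qed.

End symmetric_functions.

Section piTV_properties.
Context {R : realType}.
Local Notation mu := (@lebesgue_measure R).
Variables f g w : R -> R.
Hypotheses (mf : measurable_fun setT f) (mg : measurable_fun setT g).
Hypotheses (f_ge0 : forall x, 0 <= f x) (g_ge0 : forall x, 0 <= g x).
Hypothesis g_sym : symmetric0 g.

Let in_itv0y (x : R) : `[0%R, +oo[%classic x -> 0 <= x.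
Proof. by rewrite /= in_itv /= andbT. Qed.

Lemma piTVN (l : R) : piTV f g w (- l) = piTV f g w l.
Proof.
by congr (_ * _); congr Rintegral; apply: funext => x; rewrite mulNr g_sym.
Qed.

Lemma piTV_ge0 (l : R) : (forall x, 0 <= x -> 0 <= w x) -> 0 <= piTV f g w l.
Proof.
move=> w_ge0; rewrite mulr_ge0 // Rintegral_ge0 // => x /in_itv0y x_ge0.
by rewrite !mulr_ge0 ?w_ge0.
Qed.

Lemma integrable_piTV_integrand (D : set (measurableTypeR R)) (l : R) :
  measurable D -> measurable_fun setT w -> bounded_fun g ->
  mu.-integrable D (EFin \o (fun x => w x * f x)) ->
  mu.-integrable D (EFin \o (fun x => w x * f x * g (l * w x))).
Proof.
move=> mD mw [M [M_real g_le]] wf_int.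
have mgw : measurable_fun D (fun x => g (l * w x)).
  apply: measurable_funTS; apply: measurableT_comp mg _.
  exact: measurableT_comp (mulrl_measurable l) mw.
have gw_bnd : [bounded g (l * w x) | x in D].
  by exists M; split => // N MN x _; exact: g_le.
by have := integrableMl mD wf_int mgw gw_bnd; apply: eq_integrable.
Qed.

Lemma piTV_le_normr (l1 l2 : R) :
  measurable_fun setT w -> (forall x, 0 <= x -> 0 <= w x) ->
  bounded_fun g -> unimodal g ->
  (\int[mu]_(x in `[0%R, +oo[) (w x * f x)%:E < +oo)%E ->
  `|l1| <= `|l2| -> piTV f g w l2 <= piTV f g w l1.
Proof.
move=> mw w_ge0 g_bnd g_uni wf_fin l12.
have wf_int : mu.-integrable `[0%R, +oo[ (EFin \o (fun x => w x * f x)).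
  apply/integrableP; split.
    by apply/measurable_EFinP/measurable_funTS; exact: measurable_funM.
  rewrite (le_lt_trans _ wf_fin) // le_eqVlt; apply/orP; left; apply/eqP.
  apply: eq_integral => x /[!inE] /in_itv0y x_ge0.
  by rewrite /= ger0_norm // mulr_ge0 ?w_ge0.
rewrite ler_pM2l //; apply: le_Rintegral => //;
  [exact: integrable_piTV_integrand|exact: integrable_piTV_integrand|].
move=> x /in_itv0y x_ge0; rewrite ler_wpM2l ?mulr_ge0 ?w_ge0 //.
apply: symmetric_unimodal_le_normr => //.
by rewrite !normrM (ger0_norm (w_ge0 _ x_ge0)) ler_wpM2r ?w_ge0.
Qed.

Lemma piTV_id_le (M l : R) : l != 0 -> (forall x, 0 <= x -> f x <= M) ->
  (\int[mu]_(x in `[0%R, +oo[) (x * g x)%:E < +oo)%E ->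
  piTV f g id l <=
    2 * M * fine (\int[mu]_(x in `[0%R, +oo[) (x * g x)%:E)%E / `|l| ^+ 2.
Proof.
move=> l_neq0 f_le xg_fin; set K := (\int[mu]_(x in _) _)%E in xg_fin *.
have l_gt0 : 0 < `|l| by rewrite normr_gt0.
have M_ge0 : 0 <= M by rewrite (le_trans (f_ge0 0)) ?f_le.
have K_fin : K \is a fin_num.
  rewrite ge0_fin_numE // integral_ge0 // => x /in_itv0y x_ge0.
  by rewrite lee_fin mulr_ge0.
have mxg : measurable_fun setT (fun x : R => x * g x).
  by apply: measurable_funM => //; exact: measurable_id.
have dilate_itv0y : ( *%R `|l|) @^-1` `[0%R, +oo[%classic = `[0%R, +oo[%classic.
  by apply/seteqP; split => x /=; rewrite !in_itv /= !andbT pmulr_rge0.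
rewrite /piTV /Rintegral; set I := (\int[mu]_(x in _) _)%E.
have I_ge0 : (0 <= I)%E.
  by apply: integral_ge0 => x /in_itv0y x_ge0; rewrite lee_fin !mulr_ge0.
have I_le : (I <= (M / `|l|)%:E * ((`|l|^-1)%:E * K))%E.
  rewrite -(ge0_integral_dilation _ l_gt0) ?dilate_itv0y //; first last.
  - by move=> x /in_itv0y x_ge0; rewrite lee_fin mulr_ge0.
  - exact/measurable_funTS/measurable_EFinP.
  rewrite -ge0_integralZl_EFin ?divr_ge0 //; first last.
  - apply/measurable_funTS/measurable_EFinP.
    exact: measurableT_comp mxg (mulrl_measurable _).
  - by move=> x /in_itv0y x_ge0; rewrite lee_fin !mulr_ge0 // ltW.
  apply: ge0_le_integral => //.
  - by move=> x /in_itv0y x_ge0; rewrite lee_fin !mulr_ge0.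
  - apply/measurable_funTS/measurable_EFinP/measurable_funM.
      by apply: measurable_funM => //; exact: measurable_id.
    exact: measurableT_comp mg (mulrl_measurable _).
  - apply: measurable_funTS; apply: measurable_funeM; apply/measurable_EFinP.
    exact: measurableT_comp mxg (mulrl_measurable _).
  move=> x /in_itv0y x_ge0; rewrite lee_fin /=.
  have -> : g (l * x) = g (`|l| * x).
    by rewrite -[LHS](symmetric0_normr g_sym) normrM (ger0_norm x_ge0).
  have -> : M / `|l| * (`|l| * x * g (`|l| * x)) = x * M * g (`|l| * x).
    by field; rewrite gt_eqF.
  by rewrite ler_wpM2r // ler_wpM2l // f_le.
have bound_fin : ((M / `|l|)%:E * ((`|l|^-1)%:E * K))%E \is a fin_num.
  by rewrite -(fineK K_fin) -!EFinM.
have I_fin : I \is a fin_num.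
  by rewrite ge0_fin_numE // (le_lt_trans I_le) // ltey_eq bound_fin.
apply: (le_trans (ler_wpM2l _ (fine_le I_fin bound_fin I_le))) => //.
rewrite -(fineK K_fin) -!EFinM /= le_eqVlt; apply/orP; left; apply/eqP.
by field; rewrite gt_eqF.
Qed.

End piTV_properties.

Theorem theorem1 (R : realType) (f G g w : R -> R)
  (hf : prob_density f) (hfs : symmetric0 f)
  (hG : cdf_of_density G g) (hGs : cdf_symmetric0 G)
  (hg : prob_density g) (hgs : symmetric0 g) (hgb : bounded_fun g)
  (hwm : measurable_fun setT w) (hwo : odd_fun w)
  (hwpos : forall x, 0 < x -> 0 < w x)
  (hwf : (\int[@lebesgue_measure R]_(x in `[0%R, +oo[) (w x * f x)%:E < +oo)%E) :
  (* (i) symmetry about 0 *)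
  (forall l, piTV f g w (- l) = piTV f g w l) /\
  (* (ii) g unimodal => nonincreasing in |lambda| *)
  (unimodal g -> forall l1 l2, `|l1| <= `|l2| -> piTV f g w l2 <= piTV f g w l1) /\
  (* (iii) tails O(|lambda|^-2) *)
  ((forall x, w x = x) -> unimodal f ->
   (\int[@lebesgue_measure R]_(x in `[0%R, +oo[) (x * g x)%:E < +oo)%E ->
   exists C L : R, forall l, L <= `|l| -> `|piTV f g w l| <= C / `|l| ^+ 2).
Proof.
(* [G] enters [piTV] only through its density [g]. *)
have [mf [f_ge0 _]] := hf; have [mg [g_ge0 _]] := hg.
have w_ge0 x : 0 <= x -> 0 <= w x by exact: odd_fun_ge0.
split; first exact: piTVN.
split; first by move=> g_uni l1 l2; exact: piTV_le_normr.
move=> w_id f_uni xg_fin; have -> : w = id by apply: funext.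
exists (2 * f 0 * fine (\int[lebesgue_measure]_(x in `[0%R, +oo[) (x * g x)%:E)%E), 1.
move=> l l_ge1; rewrite ger0_norm ?piTV_ge0 //.
apply: piTV_id_le => //; first by rewrite -normr_gt0 (lt_le_trans ltr01).
by move=> x x_ge0; apply: symmetric_unimodal_le_normr => //; rewrite normr0.
Qed.
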